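(* Let $N\ge 1$, $L\ge 1$, $M\ge 2$ be integers and let $\omega>0$, $\eta>0$. Let $\mathcal{C}_1,\dots,\mathcal{C}_L\in\mathbb{R}^{r_1\times\cdots\times r_{N+1}}$ be core tensors and, for each $d=1,\dots,N+1$, let $f_{\theta_d}:\mathbb{R}\to\mathbb{R}^{r_d}$ be a fully-connected neural network of depth $M$ with sine activation, i.e. $$f_{\theta_d}(x)=\mathbf{W}^{d}_M\,\sigma\big(\mathbf{W}^{d}_{M-1}\,\sigma(\cdots\sigma(\mathbf{W}^{d}_1 x)\cdots)\big),$$ where $\mathbf{W}^d_1\in\mathbb{R}^{m^d_1\times 1}$, $\mathbf{W}^d_k\in\mathbb{R}^{m^d_k\times m^d_{k-1}}$, $\mathbf{W}^d_M\in\mathbb{R}^{r_d\times m^d_{M-1}}$, and $\sigma(t)=\sin(\omega t)$ is applied entrywise. Assume $\|\mathcal{C}_l\|_{\ell_1}\le\eta$ for all $l$ and $\|\mathbf{W}^d_k\|_{\ell_1}\le\eta$ for all $d,k$. For $l=1,\dots,L$ define $s_l:\mathbb{R}^{N+1}\to\mathbb{R}$ by $$s_l(\mathbf{v})=\mathcal{C}_l\times_1 f_{\theta_1}(\mathbf{v}_{(1)})\times_2\cdots\times_{N+1} f_{\theta_{N+1}}(\mathbf{v}_{(N+1)}).$$ Then for any $l_1,l_2\in\{1,\dots,L\}$, any $d\in\{1,\dots,N+1\}$, and any real numbers $v_1,\dots,v_{d-1},v_d',v_d'',v_{d+1},\dots,v_{N+1}$, $$|s_{l_1}(v_1,\dots,v_{d-1},v_d',v_{d+1},\dots,v_{N+1})-s_{l_2}(v_1,\dots,v_{d-1},v_d'',v_{d+1},\dots,v_{N+1})|\le\delta_1|v_d'-v_d''|+\delta_2,$$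 where $\xi=\max\{|v_1|,\dots,|v_{d-1}|,|v_d'|,|v_d''|,|v_{d+1}|,\dots,|v_{N+1}|\}$, $\delta_1=\eta^{MN+M+1}\omega^{(M-1)(N+1)}\xi^{N}$ and $\delta_2=2\eta^{MN+M+1}\omega^{(M-1)(N+1)}\xi^{N+1}$. Moreover, when $l_1=l_2$ the bound holds with $\delta_2$ removed, i.e. the left-hand side is at most $\delta_1|v_d'-v_d''|$.
   Context: For a vector $\mathbf{v}$, $\mathbf{v}_{(d)}$ denotes its $d$-th entry. The $\ell_1$-norm of a tensor or matrix is the sum of absolute values of all its entries: $\|\mathcal{X}\|_{\ell_1}=\sum_{i_1,\dots,i_K}|\mathcal{X}_{(i_1,\dots,i_K)}|$. For $\mathcal{X}\in\mathbb{R}^{n_1\times\cdots\times n_K}$, $\mathbf{X}^{(d)}=\mathrm{unfold}_d(\mathcal{X})\in\mathbb{R}^{n_d\times\prod_{j\ne d}n_j}$ is the mode-$d$ unfolding and $\mathrm{fold}_d$ its inverse; the mode-$d$ product with $\mathbf{A}\in\mathbb{R}^{m\times n_d}$ is $\mathcal{X}\times_d\mathbf{A}=\mathrm{fold}_d(\mathbf{A}\mathbf{X}^{(d)})$. A vector $\mathbf{a}\in\mathbb{R}^{r_d}$ used in a mode-$d$ product is treated as the $1\times r_d$ matrix $\mathbf{a}^\top$, so that $\mathcal{C}_l\times_1 f_{\theta_1}(\cdot)\times_2\cdots\times_{N+1}f_{\theta_{N+1}}(\cdot)$ is a scalar. *)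

From HB Require Import structures.
From mathcomp Require Import all_boot all_order all_algebra.
From mathcomp Require Import all_classical all_reals all_analysis.
Set Implicit Arguments. Unset Strict Implicit. Unset Printing Implicit Defensive.
Import Order.TTheory GRing.Theory Num.Theory.
Local Open Scope ring_scope.

Section Defs.
Variable R : realType.

Definition sin_act (omega t : R) : R := sin (omega * t).

Definition mx_l1 m n (A : 'M[R]_(m, n)) : R := \sum_(i < m) \sum_(j < n) `|A i j|.

(* Layer sizes: sz 0 (= 1, the input), sz 1 = m_1, ..., sz M = r (output).
   Weights (0-indexed): W k : 'M_(sz k.+1, sz k), i.e. W k is the paper's W_{k+1}. *)
Fixpoint sinnet_hidden (sz : nat -> nat) (W : forall k : nat, 'M[R]_(sz k.+1, sz k))
  (omega x : R) (k : nat) : 'cV[R]_(sz k) :=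
  match k with
  | 0 => const_mx x
  | k'.+1 => map_mx (sin_act omega) (W k' *m sinnet_hidden W omega x k')
  end.

(* output dimension of the network (= sz M when M >= 1) *)
Definition out_dim (sz : nat -> nat) (M : nat) : nat := sz M.-1.+1.

Definition sinnet (sz : nat -> nat) (W : forall k : nat, 'M[R]_(sz k.+1, sz k))
  (omega : R) (M : nat) (x : R) : 'cV[R]_(out_dim sz M) :=
  W M.-1 *m sinnet_hidden W omega x M.-1.

Definition midx K (r : 'I_K -> nat) := {dffun forall d : 'I_K, 'I_(r d)}.

Definition tensor_l1 K (r : 'I_K -> nat) (C : midx r -> R) : R :=
  \sum_(i : midx r) `|C i|.

(* full contraction C x_1 u_1^T x_2 ... x_K u_K^T (mode products with vectors) *)
Definition tensor_contract K (r : 'I_K -> nat) (C : midx r -> R)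
  (u : forall d : 'I_K, 'cV[R]_(r d)) : R :=
  \sum_(i : midx r) C i * \prod_(d < K) u d (i d) 0.

Definition upd_coord K (v : 'I_K -> R) (d : 'I_K) (a : R) : 'I_K -> R :=
  fun j => if j == d then a else v j.

Definition xi_of K (v : 'I_K -> R) (d : 'I_K) (a b : R) : R :=
  Num.max (Num.max `|a| `|b|) (\big[Num.max/0]_(j < K | j != d) `|v j|).

End Defs.

From HB Require Import structures.
From mathcomp Require Import all_boot all_order all_algebra.
From mathcomp Require Import all_classical all_reals all_analysis.
From mathcomp Require Import zify ring.
Import Order.TTheory GRing.Theory Num.Theory.
Import numFieldNormedType.Exports.
Set Implicit Arguments. Unset Strict Implicit.
Local Open Scope ring_scope.

(* Everything is measured in the entrywise l1 norm, which is submultiplicative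
   and dominates every entry.  Since sin is 1-Lipschitz, a sine network is
   Lipschitz with constant lip = eta (omega eta)^(M-1), and it vanishes at 0,
   so |f(x)|_1 <= lip |x|.  A full contraction is bounded by |C|_1 times the
   product of the factor norms, and changing one factor changes it by at most
   |C|_1 times that factor's change times the product of the other norms.  With
   all inputs bounded by xi this gives delta1; for l1 <> l2 each of the two
   values alone is at most eta (lip xi)^(N+1), which gives delta2. *)

Lemma sin_lipschitz (R : realType) (s t : R) : `|sin s - sin t| <= `|s - t|.
Proof.
wlog le_ts : s t / t <= s.
  move=> H; case: (leP t s) => [/H//|/ltW/H].
  by rewrite distrC [`|s - t|]distrC.
have sin' x : x \in `]t, s[%R -> is_derive x 1 (@sin R) (cos x).
  by move=> _; exact: is_derive_sin.
have [|c _ ->] := MVT_segment le_ts sin'.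
  exact/continuous_subspaceT/continuous_sin.
by rewrite normrM ler_piMl // cos_max.
Qed.

Section L1Norm.
Variable R : realType.

Lemma mx_l1_ge0 m n (A : 'M[R]_(m, n)) : 0 <= mx_l1 A.
Proof. by apply: sumr_ge0 => i _; apply: sumr_ge0. Qed.

Lemma row_l1_le_mx_l1 m n (A : 'M[R]_(m, n)) i : \sum_(j < n) `|A i j| <= mx_l1 A.
Proof. by rewrite /mx_l1 (bigD1 i) //= lerDl; apply: sumr_ge0 => k _; apply: sumr_ge0. Qed.

Lemma normr_entry_le_mx_l1 m n (A : 'M[R]_(m, n)) i j : `|A i j| <= mx_l1 A.
Proof.
apply: le_trans (row_l1_le_mx_l1 A i).
by rewrite (bigD1 j) //= lerDl; apply: sumr_ge0.
Qed.

Lemma mx_l1_mulmx m n p (A : 'M[R]_(m, n)) (B : 'M[R]_(n, p)) :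
  mx_l1 (A *m B) <= mx_l1 A * mx_l1 B.
Proof.
rewrite /mx_l1 mulr_suml; apply: ler_sum => i _.
apply: (@le_trans _ _ (\sum_(j < n) `|A i j| * \sum_(k < p) `|B j k|)).
  under [leRHS]eq_bigr do rewrite mulr_sumr.
  rewrite exchange_big /=; apply: ler_sum => k _; rewrite mxE.
  by apply: le_trans (ler_norm_sum _ _ _) _; apply: ler_sum => j _; rewrite normrM.
rewrite mulr_suml; apply: ler_sum => j _.
exact/ler_wpM2l/(row_l1_le_mx_l1 B j).
Qed.

Lemma mx_l1_map_sin_act (omega : R) m n (A B : 'M[R]_(m, n)) : 0 <= omega ->
  mx_l1 (map_mx (sin_act omega) A - map_mx (sin_act omega) B) <= omega * mx_l1 (A - B).
Proof.
move=> omega_ge0; rewrite /mx_l1 mulr_sumr; apply: ler_sum => i _.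
rewrite mulr_sumr; apply: ler_sum => j _; rewrite !mxE /sin_act.
by apply: le_trans (sin_lipschitz _ _) _; rewrite -mulrBr normrM ger0_norm.
Qed.

End L1Norm.

Section SineNetwork.
Variables (R : realType) (sz : nat -> nat) (W : forall k : nat, 'M[R]_(sz k.+1, sz k)).
Variables (omega eta : R) (M : nat).
Hypothesis sz0 : sz 0%N = 1%N.
Hypothesis omega_ge0 : 0 <= omega.
Hypothesis W_l1 : forall k, (k < M)%N -> mx_l1 (W k) <= eta.
Hypothesis M_gt0 : (0 < M)%N.

Definition sinnet_lip_const : R := eta * (omega * eta) ^+ M.-1.

Let lt_pred_M : (M.-1 < M)%N. Proof. by rewrite ltn_predL. Qed.

Let eta_ge0 : 0 <= eta. Proof. exact: le_trans (mx_l1_ge0 _) (W_l1 lt_pred_M). Qed.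

Lemma sinnet_lip_const_ge0 : 0 <= sinnet_lip_const.
Proof. by rewrite mulr_ge0 // exprn_ge0 // mulr_ge0. Qed.

Lemma sinnet_hidden0 k : sinnet_hidden W omega 0 k = 0.
Proof.
elim: k => [|k IH] /=; apply/matrixP => i j; rewrite !mxE //.
by rewrite /sin_act IH big1 ?mulr0 ?sin0 // => l _; rewrite mxE mulr0.
Qed.

Lemma sinnet0 : sinnet W omega M 0 = 0.
Proof. by rewrite /sinnet sinnet_hidden0 mulmx0. Qed.

Lemma sinnet_hidden_lipschitz x y k : (k <= M)%N ->
  mx_l1 (sinnet_hidden W omega x k - sinnet_hidden W omega y k)
    <= (omega * eta) ^+ k * `|x - y|.
Proof.
elim: k => [|k IH] le_kM /=.
  rewrite /mx_l1 expr0 mul1r; under eq_bigr do rewrite big_ord1 !mxE.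
  by rewrite sumr_const card_ord sz0.
apply: le_trans (mx_l1_map_sin_act _ _ omega_ge0) _; rewrite -mulmxBr exprSr.
rewrite -!mulrA mulrCA ler_wpM2l //; apply: le_trans (mx_l1_mulmx _ _) _.
rewrite mulrCA; apply: ler_pM; rewrite ?mx_l1_ge0 ?W_l1 //.
exact: IH (ltnW le_kM).
Qed.

Lemma sinnet_lipschitz x y :
  mx_l1 (sinnet W omega M x - sinnet W omega M y) <= sinnet_lip_const * `|x - y|.
Proof.
rewrite /sinnet -mulmxBr -mulrA; apply: le_trans (mx_l1_mulmx _ _) _.
apply: ler_pM; rewrite ?mx_l1_ge0 ?W_l1 //.
exact: sinnet_hidden_lipschitz (ltnW lt_pred_M).
Qed.

Lemma sinnet_l1_le x : mx_l1 (sinnet W omega M x) <= sinnet_lip_const * `|x|.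
Proof. by have := sinnet_lipschitz x 0; rewrite sinnet0 !subr0. Qed.

End SineNetwork.

Section TensorContraction.
Variables (R : realType) (K : nat) (r : 'I_K -> nat) (C : midx r -> R).

Lemma tensor_contract_le (u : forall e, 'cV[R]_(r e)) (B : R) :
  (forall e, mx_l1 (u e) <= B) -> `|tensor_contract C u| <= tensor_l1 C * B ^+ K.
Proof.
move=> u_le; rewrite /tensor_contract /tensor_l1 mulr_suml.
apply: le_trans (ler_norm_sum _ _ _) _; apply: ler_sum => i _.
rewrite normrM ler_wpM2l // normr_prod -[K in B ^+ K]card_ord -prodr_const.
by apply: ler_prod => e _; rewrite normr_ge0 (le_trans (normr_entry_le_mx_l1 _ _ _)).
Qed.

Lemma tensor_contract_change1 (u u' : forall e, 'cV[R]_(r e)) (d : 'I_K) (B : R) :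
  (forall e, e != d -> u e = u' e) -> (forall e, e != d -> mx_l1 (u e) <= B) ->
  `|tensor_contract C u - tensor_contract C u'|
    <= tensor_l1 C * (mx_l1 (u d - u' d) * B ^+ K.-1).
Proof.
move=> eq_uu' u_le; rewrite /tensor_contract /tensor_l1 -sumrB mulr_suml.
apply: le_trans (ler_norm_sum _ _ _) _; apply: ler_sum => i _.
rewrite -mulrBr normrM ler_wpM2l // (bigD1 d) //= [X in _ - X](bigD1 d) //=.
under [X in _ - _ * X]eq_bigr => e ne_ed do rewrite -eq_uu' //.
rewrite -mulrBl normrM; apply: ler_pM => //.
  by have := normr_entry_le_mx_l1 (u d - u' d) (i d) 0; rewrite !mxE.
rewrite normr_prod -[K in K.-1]card_ord -(cardC1 d) -prodr_const.
by apply: ler_prod => e /u_le; rewrite normr_ge0; apply: le_trans (normr_entry_le_mx_l1 _ _ _).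
Qed.

End TensorContraction.

Section SineNetworkContraction.
Variables (R : realType) (K : nat) (sz : 'I_K -> nat -> nat).
Variable W : forall (e : 'I_K) (k : nat), 'M[R]_(sz e k.+1, sz e k).
Variables (omega eta : R) (M : nat).
Variable C : midx (fun e => out_dim (sz e) M) -> R.
Hypothesis sz0 : forall e, sz e 0%N = 1%N.
Hypothesis omega_ge0 : 0 <= omega.
Hypothesis W_l1 : forall e k, (k < M)%N -> mx_l1 (W e k) <= eta.
Hypothesis M_gt0 : (0 < M)%N.

Let lip : R := sinnet_lip_const omega eta M.

Let lip_ge0 (e : 'I_K) : 0 <= lip.
Proof. exact: sinnet_lip_const_ge0 omega_ge0 (W_l1 e) M_gt0. Qed.

Let sinnet_l1_le_lip (x xi : R) e :
  `|x| <= xi -> mx_l1 (sinnet (W e) omega M x) <= lip * xi.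
Proof.
move=> x_le; apply: le_trans (sinnet_l1_le (sz0 e) omega_ge0 (W_l1 e) M_gt0 _) _.
by rewrite ler_wpM2l ?(lip_ge0 e).
Qed.

Lemma tensor_contract_sinnet_le (x : 'I_K -> R) (xi : R) : (forall e, `|x e| <= xi) ->
  `|tensor_contract C (fun e => sinnet (W e) omega M (x e))|
    <= tensor_l1 C * (sinnet_lip_const omega eta M * xi) ^+ K.
Proof. by move=> x_le; apply: tensor_contract_le => e; apply: sinnet_l1_le_lip. Qed.

Lemma tensor_contract_sinnet_change1 (x y : 'I_K -> R) (d : 'I_K) (xi : R) :
  (forall e, e != d -> x e = y e) -> (forall e, `|x e| <= xi) ->
  `|tensor_contract C (fun e => sinnet (W e) omega M (x e))
    - tensor_contract C (fun e => sinnet (W e) omega M (y e))|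
  <= tensor_l1 C * (sinnet_lip_const omega eta M * `|x d - y d|
                    * (sinnet_lip_const omega eta M * xi) ^+ K.-1).
Proof.
move=> eq_xy x_le.
apply: le_trans (tensor_contract_change1 (d := d) (B := lip * xi) _ _ _) _.
- by move=> e /eq_xy ->.
- by move=> e _; apply: sinnet_l1_le_lip.
have xi_ge0 : 0 <= xi := le_trans (normr_ge0 _) (x_le d).
apply: ler_wpM2l; first exact: sumr_ge0.
apply: ler_wpM2r; first exact: exprn_ge0 (mulr_ge0 (lip_ge0 d) xi_ge0).
exact: sinnet_lipschitz (sz0 d) omega_ge0 (W_l1 d) M_gt0 _ _.
Qed.

End SineNetworkContraction.

Section CoordinateBound.
Variables (R : realType) (K : nat) (v : 'I_K -> R) (d : 'I_K) (a b : R).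

Lemma upd_coord_at c : upd_coord v d c d = c.
Proof. by rewrite /upd_coord eqxx. Qed.

Lemma norm_le_xi_ofl : `|a| <= xi_of v d a b.
Proof. by rewrite /xi_of !le_max lexx. Qed.

Lemma norm_le_xi_ofr : `|b| <= xi_of v d a b.
Proof. by rewrite /xi_of !le_max lexx orbT. Qed.

Lemma upd_coord_off (c c' : R) e : e != d -> upd_coord v d c e = upd_coord v d c' e.
Proof. by rewrite /upd_coord => /negbTE ->. Qed.

Lemma norm_upd_coord_le_xi_of c : `|c| <= xi_of v d a b ->
  forall e, `|upd_coord v d c e| <= xi_of v d a b.
Proof.
move=> c_le e; rewrite /upd_coord; case: eqP => // /eqP ne_ed.
by rewrite /xi_of le_max (bigD1 e) //= !le_max lexx !orbT.
Qed.

End CoordinateBound.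

Lemma sinnet_lip_const_exprE (R : realType) (eta omega : R) (M N : nat) : (1 <= M)%N ->
  eta ^+ (M * N + M + 1) * omega ^+ ((M - 1) * (N + 1))
    = eta * sinnet_lip_const omega eta M ^+ (N + 1).
Proof.
move=> M_gt0; rewrite /sinnet_lip_const subn1 exprMn -exprM exprMn.
have -> : (M * N + M + 1 = 1 + (N + 1) + M.-1 * (N + 1))%N.
  by case: (M) M_gt0 => // m _ /=; lia.
rewrite !exprD expr1; ring.
Qed.

Theorem lemma3 (R : realType) (N L M : nat) (omega eta : R)
  (sz : 'I_N.+1 -> nat -> nat)
  (W : forall (d : 'I_N.+1) (k : nat), 'M[R]_(sz d k.+1, sz d k))
  (C : 'I_L -> midx (fun d : 'I_N.+1 => out_dim (sz d) M) -> R) :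
  (1 <= N)%N -> (1 <= L)%N -> (2 <= M)%N -> 0 < omega -> 0 < eta ->
  (forall d, sz d 0%N = 1%N) ->
  (forall l, tensor_l1 (C l) <= eta) ->
  (forall d (k : nat), (k < M)%N -> mx_l1 (W d k) <= eta) ->
  let s := fun (l : 'I_L) (v : 'I_N.+1 -> R) =>
    tensor_contract (C l) (fun d => sinnet (W d) omega M (v d)) in
  forall (l1 l2 : 'I_L) (d : 'I_N.+1) (v : 'I_N.+1 -> R) (a b : R),
  let xi := xi_of v d a b in
  let delta1 := eta ^+ (M * N + M + 1) * omega ^+ ((M - 1) * (N + 1)) * xi ^+ N in
  let delta2 := 2 * eta ^+ (M * N + M + 1) * omega ^+ ((M - 1) * (N + 1)) * xi ^+ (N + 1) in
  `|s l1 (upd_coord v d a) - s l2 (upd_coord v d b)| <= delta1 * `|a - b| + delta2 /\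
  (l1 = l2 -> `|s l1 (upd_coord v d a) - s l2 (upd_coord v d b)| <= delta1 * `|a - b|).
Proof.
move=> _ _ M_ge2 omega_gt0 eta_gt0 sz0 C_l1 W_l1 s l1 l2 d v a b xi delta1 delta2.
have M_gt0 : (0 < M)%N by apply: leq_trans M_ge2.
set lip := sinnet_lip_const omega eta M.
have xi_ge0 : 0 <= xi := le_trans (normr_ge0 a) (norm_le_xi_ofl v d a b).
have lip_ge0 : 0 <= lip := sinnet_lip_const_ge0 (ltW omega_gt0) (W_l1 d) M_gt0.
have s_le l c : `|c| <= xi -> `|s l (upd_coord v d c)| <= eta * (lip * xi) ^+ (N + 1).
  move=> /norm_upd_coord_le_xi_of c_le.
  apply: le_trans (tensor_contract_sinnet_le _ sz0 (ltW omega_gt0) W_l1 M_gt0 c_le) _.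
  by rewrite addn1 ler_wpM2r ?C_l1 // exprn_ge0 // mulr_ge0.
have delta1E : delta1 = eta * lip ^+ (N + 1) * xi ^+ N.
  by rewrite /delta1 sinnet_lip_const_exprE.
have delta2E : delta2 = 2 * (eta * (lip * xi) ^+ (N + 1)).
  rewrite /delta2 -[2 * _ * _]mulrA sinnet_lip_const_exprE // -/lip.
  by rewrite [(lip * xi) ^+ _]exprMn !mulrA.
split.
  apply: le_trans (ler_normB _ _) _; apply: le_trans (lerD (s_le l1 a _) (s_le l2 b _)) _;
    rewrite ?norm_le_xi_ofl ?norm_le_xi_ofr //.
  by rewrite -mulr2n -mulr_natl delta2E lerDr delta1E !mulr_ge0 ?exprn_ge0 // ltW.
move=> <-.
apply: le_trans (tensor_contract_sinnet_change1 _ sz0 (ltW omega_gt0) W_l1 M_gt0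
  (@upd_coord_off _ _ v d a b) (norm_upd_coord_le_xi_of (norm_le_xi_ofl v d a b))) _.
rewrite !upd_coord_at -/lip -/xi; apply: le_trans (ler_wpM2r _ (C_l1 l1)) _.
  exact: mulr_ge0 (mulr_ge0 lip_ge0 (normr_ge0 _)) (exprn_ge0 _ (mulr_ge0 lip_ge0 xi_ge0)).
rewrite delta1E exprMn addn1 exprS le_eqVlt; apply/orP; left; apply/eqP; ring.
Qed.
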